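(* Let $\Omega\subset\mathbb{R}^d$, $T_{\text{final}}>0$, and let $s=(s_1,\dots,s_{d_s})^\top$, $s_j:\Omega\times[0,T_{\text{final}})\to\mathcal{S}_j\subset\mathbb{R}$, be a (sufficiently smooth) solution of the nonlinear PDE $\partial s/\partial t=f(s)$, where $f=(f_1,\dots,f_{d_s})^\top$ is a differentiable nonlinear function (possibly involving spatial derivatives of $s$); write $\mathcal{S}=\mathcal{S}_1\times\cdots\times\mathcal{S}_{d_s}$. Let $\mathcal{T}:\mathcal{S}\to\mathcal{W}\subset\mathbb{R}^{d_w}$ be a quadratic lifting with Jacobian $\mathcal{J}$ and $\mathcal{T}^\dagger$ a reverse lifting map (definitions in context), so that $w=\mathcal{T}(s)$ satisfies $\partial w/\partial t=a(w)+h(w)$. Let $x_1,\dots,x_n\in\Omega$ be grid points, $\bar{\mathbf{s}}(t)\in\mathbb{R}^{nd_s}$ the vector with entries $\bar{\mathbf{s}}_{(j-1)n+l}(t)=s_j(x_l,t)$, and $\bar{\mathbf{w}}(t)=\mathbf{T}(\bar{\mathbf{s}}(t))$. Suppose that $\frac{d\mathbf{s}}{dt}=\mathbf{f}(\mathbf{s})$ (with $\mathbf{f}$ Lipschitz) is a consistent order-$p$ discretization of $\partial s/\partial t=f(s)$ and that $\frac{d\mathbf{w}}{dt}=\mathbf{A}\mathbf{w}+\mathbf{H}(\mathbf{w}\otimes\mathbf{w})$, with $\mathbf{A}\in\mathbb{R}^{nd_w\times nd_w}$, $\mathbf{H}\in\mathbb{R}^{nd_w\times n^2d_w^2}$, is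 a consistent order-$p$ discretization of $\partial w/\partial t=a(w)+h(w)$ (definitions in context). Then there is a constant $C$ independent of $n$ such that for all $t$, $$\left\|\mathbf{A}\bar{\mathbf{w}}+\mathbf{H}(\bar{\mathbf{w}}\otimes\bar{\mathbf{w}})-\mathbf{J}(\mathbf{T}^\dagger(\bar{\mathbf{w}}))\,\mathbf{f}(\mathbf{T}^\dagger(\bar{\mathbf{w}}))\right\|_2\le C\, n^{\frac12-p}.$$
   Context: Quadratic lifting: a map $\mathcal{T}:\mathcal{S}\to\mathcal{W}\subset\mathbb{R}^{d_w}$, $d_w\ge d_s$, differentiable in $s$ with Jacobian $\mathcal{J}(s)$ satisfying $\sup_{s\in\mathcal{S}}\|\mathcal{J}(s)\|\le c$ for some $c>0$, such that the lifted state $w(x,t)=\mathcal{T}(s(x,t))$ satisfies $\partial w/\partial t=a(w)+h(w)$ with $a=(a_1,\dots,a_{d_w})^\top$, $h=(h_1,\dots,h_{d_w})^\top$, each $a_j$ linear and each $h_j$ quadratic (these operators may involve spatial derivatives). Reverse lifting map: a map $\mathcal{T}^\dagger:\mathcal{W}\to\mathcal{S}$, differentiable with bounded derivative on $\mathcal{W}$, with $\mathcal{T}^\dagger(\mathcal{T}(s))=s$ for all $s\in\mathcal{S}$. Discrete maps: $\mathbf{T}:\mathbb{R}^{nd_s}\to\mathbb{R}^{nd_w}$ applies $\mathcal{T}$ node-wise, i.e. its $((j-1)n+l)$-th output is $\mathcal{T}_j$ applied to the $d_s$ state values at node $x_l$; $\mathbf{J}(\mathbf{s})\in\mathbb{R}^{nd_w\times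 nd_s}$ is the Jacobian of $\mathbf{T}$; $\mathbf{T}^\dagger$ applies $\mathcal{T}^\dagger$ node-wise. The semi-discrete model $\frac{d\mathbf{s}}{dt}=\mathbf{f}(\mathbf{s})$, $\mathbf{f}:\mathcal{S}^n\to\mathcal{S}^n$ Lipschitz, is a consistent order-$p$ discretization if there is $c_s>0$ with $|\mathbf{f}_{(j-1)n+l}(\bar{\mathbf{s}}(t))-f_j(s(x,t))|_{x=x_l}|\le c_s n^{-p}$ for all $t$, $j=1,\dots,d_s$, $l=1,\dots,n$. The lifted discrete model is a consistent order-$p$ discretization if there is $c_w>0$ with $|\mathbf{A}_{(j-1)n+l,:}\bar{\mathbf{w}}+\mathbf{H}_{(j-1)n+l,:}(\bar{\mathbf{w}}\otimes\bar{\mathbf{w}})-(a_j(w)+h_j(w))|_{x=x_l}|\le c_w n^{-p}$ for all $t$, $j=1,\dots,d_w$, $l=1,\dots,n$, where $\mathbf{M}_{i,:}$ denotes the $i$-th row. For $\mathbf{b}=(b_1,\dots,b_m)^\top$, $\mathbf{b}\otimes\mathbf{b}=(b_1^2,b_1b_2,\dots,b_1b_m,b_2b_1,\dots,b_m^2)^\top\in\mathbb{R}^{m^2}$. *)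

From HB Require Import structures.
From mathcomp Require Import all_boot all_order all_algebra.
From mathcomp Require Import all_classical all_reals all_analysis.
Set Implicit Arguments. Unset Strict Implicit. Unset Printing Implicit Defensive.
Import Order.TTheory GRing.Theory Num.Theory.
Import numFieldNormedType.Exports.
Local Open Scope classical_set_scope.
Local Open Scope ring_scope.

(* ---------- index bookkeeping: entry ((j-1)n + l) (1-based) = j*n + l (0-based) ---------- *)
Lemma idx_proof (a n : nat) (j : 'I_a) (l : 'I_n) : (j * n + l < a * n)%N.
Proof.
apply: (@leq_trans (j * n + n)%N); first by rewrite ltn_add2l.
by rewrite -mulSnr leq_mul2r ltn_ord orbT.
Qed.
Definition idx (a n : nat) (j : 'I_a) (l : 'I_n) : 'I_(a * n) :=
  Ordinal (idx_proof j l).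

Lemma blk_proof (a n : nat) (k : 'I_(a * n)) : (k %/ n < a)%N.
Proof.
case: k => k /= Hk; case: n Hk => [|n] Hk; first by rewrite muln0 in Hk.
by rewrite ltn_divLR.
Qed.
Lemma nod_proof (a n : nat) (k : 'I_(a * n)) : (k %% n < n)%N.
Proof.
case: k => k /= Hk; case: n Hk => [|n] Hk; first by rewrite muln0 in Hk.
by rewrite ltn_pmod.
Qed.
Definition blk (a n : nat) (k : 'I_(a * n)) : 'I_a := Ordinal (blk_proof k).
Definition nod (a n : nat) (k : 'I_(a * n)) : 'I_n := Ordinal (nod_proof k).

Section Defs.
Variable R : realType.

Definition norm2 (p q : nat) (v : 'M[R]_(p, q)) : R :=
  Num.sqrt (\sum_(i < p) \sum_(j < q) v i j ^+ 2).

(* Kronecker square b ⊗ b = (b1^2, b1 b2, ..., b1 bm, b2 b1, ..., bm^2)^T *)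
Definition kron2 (m : nat) (b : 'cV[R]_m) : 'cV[R]_(m * m) :=
  \col_(k < m * m) (b (blk k) 0 * b (nod k) 0).

Definition node (a n : nat) (v : 'cV[R]_(a * n)) (l : 'I_n) : 'rV[R]_a :=
  \row_(j < a) v (idx j l) 0.

(* sampling of a field u : R^d -> R^a at grid points x_1..x_n:
   entry ((j-1)n + l) is u_j(x_l) *)
Definition sample (d a n : nat) (x : 'I_n -> 'rV[R]_d) (u : 'rV[R]_d -> 'rV[R]_a)
  : 'cV[R]_(a * n) :=
  \col_(k < a * n) u (x (nod k)) 0 (blk k).

Definition nodewise (a b n : nat) (F : 'rV[R]_a -> 'rV[R]_b) (v : 'cV[R]_(a * n))
  : 'cV[R]_(b * n) :=
  \col_(k < b * n) F (node v (nod k)) 0 (blk k).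

(* Jacobian (in the column-vector convention, size (b n) x (a n)) of the
   node-wise map  nodewise F  at v *)
Definition nodewiseJ (a b n : nat) (F : 'rV[R]_a -> 'rV[R]_b) (v : 'cV[R]_(a * n))
  : 'M[R]_(b * n, a * n) :=
  ('J (fun r : 'rV[R]_(a * n) => (nodewise F (r^T : 'cV[R]_(a * n)))^T) v^T)^T.

(* right time derivative of g at t equals v  (t ranges over [0, T_final)) *)
Definition rderiv (m : nat) (g : R -> 'rV[R]_m) (t : R) (v : 'rV[R]_m) : Prop :=
  (fun h : R => h^-1 *: (g (t + h) - g t)) @ (0 : R)^'+ --> v.

Definition linop (X : Type) (m : nat)
    (L : (X -> 'rV[R]_m) -> (X -> 'rV[R]_m)) : Prop :=
  forall (c : R) (u v : X -> 'rV[R]_m),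
    L (fun x => c *: u x + v x) = (fun x => c *: L u x + L v x).

Definition quadop (X : Type) (m : nat)
    (Q : (X -> 'rV[R]_m) -> (X -> 'rV[R]_m)) : Prop :=
  exists B : (X -> 'rV[R]_m) -> (X -> 'rV[R]_m) -> (X -> 'rV[R]_m),
    (forall u, linop (B u)) /\ (forall v, linop (fun u => B u v)) /\
    (forall w, Q w = B w w).

Definition opnorm_le (p q : nat) (M : 'M[R]_(p, q)) (c : R) : Prop :=
  forall v : 'rV[R]_p, norm2 (v *m M) <= c * norm2 v.

End Defs.

(* Sample the exact solution at the grid and lift it node by node: since T^dagger
   inverts T on S, the residual becomes A w + H (w (x) w) - J(s) f_n(s) with
   s the sampled solution and w = T(s).  At every node the chain rule, applied to
   the time derivative of T(s), gives dT(s) f(s) = a(w) + h(w).  Writing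
   f_n(s) = f(s) - e, every entry of the residual is the consistency error of
   the lifted scheme plus dT(s) e, and both are O(n^-p), the second by the
   uniform Jacobian bound on T.  The 2-norm of a vector with n d_w entries of
   size O(n^-p) is O(n^(1/2 - p)). *)

From HB Require Import structures.
From mathcomp Require Import all_boot all_order all_algebra.
From mathcomp Require Import all_classical all_reals all_analysis.
From mathcomp Require Import ring.
Set Implicit Arguments.
Unset Strict Implicit.
Unset Printing Implicit Defensive.
Import Order.TTheory GRing.Theory Num.Theory.
Import numFieldNormedType.Exports.
Local Open Scope classical_set_scope.
Local Open Scope ring_scope.

Lemma nod_idx a n (j : 'I_a) (l : 'I_n) : nod (idx j l) = l.
Proof. by apply/val_inj => /=; rewrite modnMDl modn_small. Qed.

Lemma blk_idx a n (j : 'I_a) (l : 'I_n) : blk (idx j l) = j.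
Proof.
apply/val_inj => /=; have n_gt0 : (0 < n)%N by case: l => l /=; case: n.
by rewrite divnMDl // divn_small // addn0.
Qed.

Lemma idx_blk_nod a n (k : 'I_(a * n)) : idx (blk k) (nod k) = k.
Proof. by apply/val_inj => /=; rewrite -divn_eq. Qed.

Section Norm2.
Variable R : realType.

Lemma entry_le_norm2 p q (v : 'M[R]_(p, q)) i j : `|v i j| <= norm2 v.
Proof.
rewrite /norm2 -sqrtr_sqr; apply: ler_wsqrtr.
rewrite (bigD1 i) //= (bigD1 j) //= -addrA lerDl.
by apply: addr_ge0; apply: sumr_ge0 => *; rewrite ?sumr_ge0 // => *; apply: sqr_ge0.
Qed.

Lemma norm2_le_entrywise p q (v : 'M[R]_(p, q)) e : 0 <= e ->
  (forall i j, `|v i j| <= e) -> norm2 v <= Num.sqrt (p * q)%:R * e.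
Proof.
move=> e_ge0 ve; rewrite -[e in _ * e]ger0_norm // -sqrtr_sqr -sqrtrM ?ler0n //.
apply: ler_wsqrtr.
apply: (@le_trans _ _ (\sum_(i < p) \sum_(j < q) e ^+ 2)).
  apply: ler_sum => i _; apply: ler_sum => j _.
  by rewrite -real_normK ?num_real // lerXn2r ?nnegrE // ger0_norm.
by rewrite !sumr_const !card_ord -mulrnA mulr_natl mulnC.
Qed.

Lemma norm2_diff_le a b (F : 'rV[R]_a -> 'rV[R]_b) r c e :
  opnorm_le ('J F r) c -> norm2 ('d F r e) <= c * norm2 e.
Proof. by move/(_ e); rewrite /jacobian mul_rV_lin1. Qed.

End Norm2.

Section DiscreteFields.
Variable R : realType.

Lemma node_sample d a n (x : 'I_n -> 'rV[R]_d) (u : 'rV[R]_d -> 'rV[R]_a) l :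
  node (sample x u) l = u (x l).
Proof. by apply/rowP => j; rewrite !mxE nod_idx blk_idx. Qed.

Lemma node_nodewise a b n (F : 'rV[R]_a -> 'rV[R]_b) (v : 'cV[R]_(a * n)) l :
  node (nodewise F v) l = F (node v l).
Proof. by apply/rowP => j; rewrite !mxE nod_idx blk_idx. Qed.

Lemma nodewiseK a b n (P : 'rV[R]_a -> Prop) (F : 'rV[R]_a -> 'rV[R]_b)
    (G : 'rV[R]_b -> 'rV[R]_a) (v : 'cV[R]_(a * n)) :
  (forall r, P r -> G (F r) = r) -> (forall l, P (node v l)) ->
  nodewise G (nodewise F v) = v.
Proof.
move=> FK Pv; apply/colP => k.
by rewrite mxE node_nodewise FK // mxE idx_blk_nod.
Qed.

End DiscreteFields.

Section RightDerivative.
Variable R : realType.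

Lemma diff_remainder_le (V W : normedModType R) (F : V -> W) (r : V) :
  differentiable F r -> forall eps, 0 < eps ->
  \forall u \near (0 : V), `|F (r + u) - F r - 'd F r u| <= eps * `|u|.
Proof.
move=> dF eps eps_gt0; have /eqaddoP/(_ eps eps_gt0) := diff_locally dF.
by apply: filterS => u; rewrite [r + u]addrC -addrA -opprD.
Qed.

Lemma right_increment_cvg0 (V : normedModType R) (g : R -> V) (t : R) (v : V) :
  (fun h : R => h^-1 *: (g (t + h) - g t)) @ (0 : R)^'+ --> v ->
  (fun h : R => g (t + h) - g t) @ (0 : R)^'+ --> 0.
Proof.
move=> gv; rewrite -(scale0r v).
have -> : (fun h => g (t + h) - g t) = fun h => h *: (h^-1 *: (g (t + h) - g t)).
  apply/funext => h; rewrite scalerA; have [->|h_neq0] := eqVneq h 0.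
    by rewrite addr0 subrr !scaler0.
  by rewrite mulfV // scale1r.
by apply: cvgZ => //; apply: cvg_at_right_filter; apply: cvg_id.
Qed.

Lemma right_quotient_comp_cvg (V W : normedModType R) (g : R -> V) (F : V -> W)
    (t : R) (v : V) :
  (fun h : R => h^-1 *: (g (t + h) - g t)) @ (0 : R)^'+ --> v ->
  differentiable F (g t) ->
  (fun h : R => h^-1 *: (F (g (t + h)) - F (g t))) @ (0 : R)^'+ --> 'd F (g t) v.
Proof.
move=> gv dF.
set q := fun h : R => h^-1 *: (g (t + h) - g t).
set D := fun h : R => g (t + h) - g t.
set e := fun u => F (g t + u) - F (g t) - 'd F (g t) u.
have -> : (fun h : R => h^-1 *: (F (g (t + h)) - F (g t))) =
    (fun h => 'd F (g t) (q h) + h^-1 *: e (D h)).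
  apply/funext => h; rewrite /q /e /D linearZ -scalerDr.
  by rewrite subrKC subrKC.
(* The remainder is o(|D h|), and |D h| = h |q h| with q h eventually bounded. *)
rewrite -[X in _ --> X]addr0; apply: cvgD.
  by apply: (cvg_comp _ _ gv); apply: diff_continuous.
apply/cvgr0Pnorm_lt => eps eps_gt0.
have q_bounded : \forall h \near (0 : R)^'+, `|q h| <= `|v| + 1.
  move/cvgr_dist_lt: (gv) => /(_ _ ltr01); apply: filterS => h vq_lt1.
  rewrite -[q h](subKr v) (le_trans (ler_normB _ _)) // lerD2l.
  exact: ltW.
have eps'_gt0 : 0 < eps / (`|v| + 2) by rewrite divr_gt0 // ltr_wpDl.
have e_small := right_increment_cvg0 gv (diff_remainder_le dF eps'_gt0).
near=> h.
have h_gt0 : 0 < h by near: h; exact: nbhs_right_gt.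
have qh_le : `|q h| <= `|v| + 1 by near: h; exact: q_bounded.
have eDh_le : `|e (D h)| <= eps / (`|v| + 2) * `|D h| by near: h; exact: e_small.
rewrite normrZ normfV gtr0_norm //.
apply: (@le_lt_trans _ _ (eps / (`|v| + 2) * `|q h|)).
  rewrite /q normrZ normfV gtr0_norm // mulrCA ler_wpM2l //.
  by rewrite invr_ge0 ltW.
apply: (@le_lt_trans _ _ (eps / (`|v| + 2) * (`|v| + 1))).
  by rewrite ler_wpM2l // ltW.
by rewrite mulrAC ltr_pdivrMr ?ltr_wpDl // ltr_pM2l // ltrD2l ltr1n.
Unshelve. all: by end_near.
Qed.

Lemma rderiv_comp_diff m k (g : R -> 'rV[R]_m) (F : 'rV[R]_m -> 'rV[R]_k)
    (t : R) (v : 'rV[R]_m) (w : 'rV[R]_k) :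
  rderiv g t v -> differentiable F (g t) ->
  rderiv (fun tau => F (g tau)) t w -> 'd F (g t) v = w.
Proof.
move=> gv dF Fgw; exact: cvg_unique (right_quotient_comp_cvg gv dF) Fgw.
Qed.

End RightDerivative.

Section NodewiseJacobian.
Variable R : realType.

Lemma diff_coord m n (i : 'I_m) (j : 'I_n) (M N : 'M[R]_(m, n)) :
  'd (fun P : 'M[R]_(m, n) => P i j) M N = N i j.
Proof.
have @f : {linear 'M[R]_(m, n) -> R}.
  by exists (fun P : 'M[R]_(_, _) => P i j); do 2![eexists]; do ?[constructor];
     rewrite ?mxE// => ? *; rewrite ?mxE//; move=> ?; rewrite !mxE.
rewrite (_ : (fun _ => _) = f) // diff_lin //; exact: coord_continuous.
Qed.

Lemma diff_coordwise m k (G : 'rV[R]_m -> 'rV[R]_k) (r : 'rV[R]_m) :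
  (forall j, differentiable (fun q => G q 0 j) r) ->
  differentiable G r /\ forall w, 'd G r w = \row_j 'd (fun q => G q 0 j) r w.
Proof.
move=> dG.
have EG : G = \sum_(j < k) (fun q => G q 0 j *: delta_mx 0 j).
  by rewrite fct_sumE; apply/funext => q; rewrite {1}(row_sum_delta (G q)).
have dG' : differentiable G r.
  by rewrite EG; apply: differentiable_sum => j; apply: differentiableZl.
split => // w; rewrite -deriveE // [in LHS]EG derive_sum; last first.
  by move=> j; apply: diff_derivable; apply: differentiableZl.
rewrite [RHS]row_sum_delta; apply: eq_bigr => j _.
by rewrite deriveE ?diffZl // ?mxE //; apply: differentiableZl.
Qed.

Lemma diff_node_trmx a n (l : 'I_n) (r : 'rV[R]_(a * n)) :
  differentiable (fun q : 'rV[R]_(a * n) => node q^T l) r /\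
  forall w, 'd (fun q : 'rV[R]_(a * n) => node q^T l) r w = node w^T l.
Proof.
have node_coord j : (fun q : 'rV[R]_(a * n) => node q^T l 0 j) = fun q => q 0 (idx j l).
  by apply/funext => q; rewrite !mxE.
have dP_coord j : differentiable (fun q : 'rV[R]_(a * n) => node q^T l 0 j) r.
  by rewrite node_coord; exact: differentiable_coord.
have [dP dPE] := diff_coordwise dP_coord.
split => // w; rewrite dPE; apply/rowP => j.
by rewrite mxE node_coord diff_coord !mxE.
Qed.

Lemma nodewiseJ_mul a b n (F : 'rV[R]_a -> 'rV[R]_b) (v u : 'cV[R]_(a * n)) :
  (forall l, differentiable F (node v l)) ->
  nodewiseJ F v *m u =
  \col_(k < b * n) 'd F (node v (nod k)) (node u (nod k)) 0 (blk k).
Proof.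
move=> dF.
set G := fun r : 'rV[R]_(a * n) => (nodewise F r^T)^T.
set P := fun (l : 'I_n) (r : 'rV[R]_(a * n)) => node r^T l.
have PvT l : P l v^T = node v l by rewrite /P trmxK.
have Gk k : (fun r => G r 0 k) = (fun y : 'rV[R]_b => y 0 (blk k)) \o F \o P (nod k).
  by apply/funext => r; rewrite /G /nodewise !mxE.
have dGk k : differentiable (fun r => G r 0 k) v^T.
  rewrite Gk; apply: differentiable_comp; first exact: (diff_node_trmx _ _).1.
  by apply: differentiable_comp; [rewrite PvT | exact: differentiable_coord].
have [dG dGE] := diff_coordwise dGk.
rewrite /nodewiseJ -/G -[u in LHS]trmxK -trmx_mul -deriveEjacobian // deriveE //.
apply/colP => k; rewrite dGE !mxE Gk.
have dP := (diff_node_trmx (nod k) v^T).1.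
have dFP : differentiable F (P (nod k) v^T) by rewrite PvT.
rewrite diff_comp //; last by apply: differentiable_comp => //; exact: differentiable_coord.
rewrite /= diff_comp //; last exact: differentiable_coord.
by rewrite /= diff_coord (diff_node_trmx _ _).2 PvT trmxK.
Qed.

End NodewiseJacobian.

Section Residual.
Variable R : realType.

Lemma nodewiseJ_residual_le a b n (F : 'rV[R]_a -> 'rV[R]_b) (v fv : 'cV[R]_(a * n))
    (Y : 'cV[R]_(b * n)) (g : 'I_n -> 'rV[R]_a) (z : 'I_n -> 'rV[R]_b) (c ew es : R) :
  0 <= c -> 0 <= ew -> 0 <= es ->
  (forall l, differentiable F (node v l)) ->
  (forall l, opnorm_le ('J F (node v l)) c) ->
  (forall l, 'd F (node v l) (g l) = z l) ->
  (forall j l, `|Y (idx j l) 0 - z l 0 j| <= ew) ->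
  (forall j l, `|fv (idx j l) 0 - g l 0 j| <= es) ->
  norm2 (Y - nodewiseJ F v *m fv) <= Num.sqrt (b * n)%:R * (ew + c * (Num.sqrt a%:R * es)).
Proof.
move=> c_ge0 ew_ge0 es_ge0 dF Jc dFg Yz fvg.
have bound_ge0 : 0 <= ew + c * (Num.sqrt a%:R * es).
  by rewrite addr_ge0 // !mulr_ge0 // sqrtr_ge0.
apply: le_trans (norm2_le_entrywise bound_ge0 _) _; last by rewrite muln1.
move=> k i; rewrite (ord1 i) -[k]idx_blk_nod nodewiseJ_mul // !mxE nod_idx blk_idx.
move: (blk k) (nod k) => j l.
set e := g l - node fv l.
have -> : node fv l = g l - e by rewrite subKr.
rewrite linearB dFg !mxE opprD opprK addrA.
apply: le_trans (ler_normD _ _) _; rewrite lerD ?Yz //.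
apply: le_trans (entry_le_norm2 _ 0 j) _.
apply: le_trans (norm2_diff_le _ (Jc l)) _; rewrite ler_wpM2l //.
rewrite -[a in Num.sqrt a%:R]mul1n; apply: norm2_le_entrywise => // i' j'.
by rewrite (ord1 i') !mxE distrC fvg.
Qed.

Lemma sqrt_natM_powR m n (p : R) : (0 < n)%N ->
  Num.sqrt (m * n)%:R * n%:R `^ (- p) = Num.sqrt m%:R * n%:R `^ (2^-1 - p).
Proof.
move=> n_gt0; rewrite natrM sqrtrM ?ler0n // powRD ?powR12_sqrt ?ler0n ?mulrA //.
by rewrite pnatr_eq0 -lt0n n_gt0 implybT.
Qed.

End Residual.

Unset Implicit Arguments.

Theorem lemma1 (R : realType) (d ds dw : nat) (Hdim : (ds <= dw)%N)
  (Omega : set 'rV[R]_d) (Tf : R) (HTf : 0 < Tf)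
  (Sj : 'I_ds -> set R)
  (s : 'rV[R]_d -> R -> 'rV[R]_ds)
  (f : ('rV[R]_d -> 'rV[R]_ds) -> 'rV[R]_d -> 'rV[R]_ds)
  (T : 'rV[R]_ds -> 'rV[R]_dw) (W : set 'rV[R]_dw)
  (Tdag : 'rV[R]_dw -> 'rV[R]_ds)
  (a h : ('rV[R]_d -> 'rV[R]_dw) -> 'rV[R]_d -> 'rV[R]_dw)
  (p : R)
  (x : forall n : nat, 'I_n -> 'rV[R]_d)
  (fD : forall n : nat, 'cV[R]_(ds * n) -> 'cV[R]_(ds * n))
  (A : forall n : nat, 'M[R]_(dw * n, dw * n))
  (H : forall n : nat, 'M[R]_(dw * n, (dw * n) * (dw * n)))
  (* s is an S-valued solution of ds/dt = f(s) on Omega x [0, T_final) *)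
  (Hs_in : forall y t, Omega y -> 0 <= t < Tf -> forall j, Sj j (s y t 0 j))
  (Hs_pde : forall y t, Omega y -> 0 <= t < Tf ->
     rderiv (fun tau => s y tau) t (f (fun z => s z t) y))
  (* quadratic lifting T : S -> W *)
  (HT_W : forall r : 'rV[R]_ds, (forall j, Sj j (r 0 j)) -> W (T r))
  (HT_diff : forall r : 'rV[R]_ds, (forall j, Sj j (r 0 j)) -> differentiable T r)
  (HT_J : exists c : R, 0 < c /\
     forall r : 'rV[R]_ds, (forall j, Sj j (r 0 j)) -> opnorm_le ('J T r) c)
  (Ha : linop a) (Hh : quadop h)
  (Hlift : forall y t, Omega y -> 0 <= t < Tf ->
     rderiv (fun tau => T (s y tau)) t
       (a (fun z => T (s z t)) y + h (fun z => T (s z t)) y))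
  (* reverse lifting map *)
  (Hdag_diff : forall w, W w -> differentiable Tdag w)
  (Hdag_bd : exists c' : R, forall w, W w -> opnorm_le ('J Tdag w) c')
  (Hdag_inv : forall r : 'rV[R]_ds, (forall j, Sj j (r 0 j)) -> Tdag (T r) = r)
  (* grid points *)
  (Hx : forall n (l : 'I_n), Omega (x n l))
  (* f_n : S^n -> S^n Lipschitz *)
  (HfD_S : forall n (v : 'cV[R]_(ds * n)), (forall j l, Sj j (v (idx j l) 0)) ->
     forall j l, Sj j (fD n v (idx j l) 0))
  (HfD_lip : forall n, exists L : R, forall u v : 'cV[R]_(ds * n),
     (forall j l, Sj j (u (idx j l) 0)) -> (forall j l, Sj j (v (idx j l) 0)) ->
     norm2 (fD n u - fD n v) <= L * norm2 (u - v))
  (* consistency of order p of the discretization of ds/dt = f(s) *)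
  (Hcons_s : exists cs : R, 0 < cs /\ forall n, (0 < n)%N ->
     forall t, 0 <= t < Tf -> forall (j : 'I_ds) (l : 'I_n),
       `| fD n (sample (x n) (fun z => s z t)) (idx j l) 0
          - f (fun z => s z t) (x n l) 0 j | <= cs * (n%:R `^ (- p)))
  (* consistency of order p of the discretization of dw/dt = a(w) + h(w) *)
  (Hcons_w : exists cw : R, 0 < cw /\ forall n, (0 < n)%N ->
     forall t, 0 <= t < Tf -> forall (j : 'I_dw) (l : 'I_n),
       `| (A n *m nodewise T (sample (x n) (fun z => s z t))
           + H n *m kron2 (nodewise T (sample (x n) (fun z => s z t)))) (idx j l) 0
          - (a (fun z => T (s z t)) (x n l) + h (fun z => T (s z t)) (x n l)) 0 j |
         <= cw * (n%:R `^ (- p))) :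
  exists C : R, forall n, (0 < n)%N -> forall t, 0 <= t < Tf ->
    norm2 (A n *m nodewise T (sample (x n) (fun z => s z t))
           + H n *m kron2 (nodewise T (sample (x n) (fun z => s z t)))
           - nodewiseJ T (nodewise Tdag (nodewise T (sample (x n) (fun z => s z t))))
             *m fD n (nodewise Tdag (nodewise T (sample (x n) (fun z => s z t)))))
      <= C * (n%:R `^ (2^-1 - p)).
Proof.
have [c [c_gt0 Jc]] := HT_J.
have [cs [cs_gt0 cons_s]] := Hcons_s.
have [cw [cw_gt0 cons_w]] := Hcons_w.
exists (Num.sqrt dw%:R * (cw + c * (Num.sqrt ds%:R * cs))) => n n_gt0 t t_in.
set samp := sample (x n) (fun z => s z t).
have samp_S l j : Sj j (node samp l 0 j) by rewrite node_sample; apply: Hs_in.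
rewrite (nodewiseK Hdag_inv samp_S).
have npow_ge0 : 0 <= n%:R `^ (- p) :> R by apply: powR_ge0.
apply: le_trans (nodewiseJ_residual_le (c := c) (ew := cw * n%:R `^ (- p))
  (es := cs * n%:R `^ (- p)) (g := fun l => f (fun z => s z t) (x n l))
  (z := fun l => a (fun z => T (s z t)) (x n l) + h (fun z => T (s z t)) (x n l))
  _ _ _ _ _ _ _ _) _.
- exact: ltW.
- by rewrite mulr_ge0 // ltW.
- by rewrite mulr_ge0 // ltW.
- by move=> l; rewrite node_sample; apply/HT_diff/Hs_in.
- by move=> l; rewrite node_sample; apply/Jc/Hs_in.
- move=> l; rewrite node_sample.
  apply: rderiv_comp_diff (Hs_pde _ _ (Hx n l) t_in) _ (Hlift _ _ (Hx n l) t_in).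
  exact/HT_diff/Hs_in.
- exact: cons_w n n_gt0 t t_in.
- exact: cons_s n n_gt0 t t_in.
rewrite mulrAC -sqrt_natM_powR // -mulrA ler_wpM2l ?sqrtr_ge0 // le_eqVlt.
by apply/orP; left; apply/eqP; ring.
Qed.
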